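(* Let $G$ be a non-abelian finite $p$-group ($p$ prime) possessing an abelian maximal subgroup $M$. Then $$A_G(t)=\frac{1}{|G|}\left(\frac{|Z(G)|}{1-|G|t}+\frac{|G|-|M|}{1-p|Z(G)|t}+\frac{|M|-|Z(G)|}{1-|M|t}\right).$$
   Context: For a finite group $G$ and $n\ge0$, let $\alpha_{G,n}$ be the number of orbits of $G$ acting on $G^n$ by simultaneous conjugation, and $A_G(t)=\sum_{n\ge0}\alpha_{G,n}t^n$, viewed as a rational function of $t$. *)

From mathcomp Require Import all_boot all_order all_algebra all_fingroup all_solvable.
Set Implicit Arguments. Unset Strict Implicit. Unset Printing Implicit Defensive.

Definition tuples_in (gT : finGroupType) (G : {set gT}) (n : nat)
  : {set {ffun 'I_n -> gT}} :=
  [set x : {ffun 'I_n -> gT} | [forall i, x i \in G]].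

Definition sconj_orbit (gT : finGroupType) (G : {set gT}) (n : nat)
  (x : {ffun 'I_n -> gT}) : {set {ffun 'I_n -> gT}} :=
  [set [ffun i => (x i ^ g)%g] | g in G].

Definition alpha (gT : finGroupType) (G : {set gT}) (n : nat) : nat :=
  #|[set sconj_orbit G x | x in tuples_in G n]|.

(* Coefficient of t^n in the power series expansion (at t = 0) of
   1/|G| * ( |Z|/(1-|G|t) + (|G|-|M|)/(1-p|Z|t) + (|M|-|Z|)/(1-|M|t) ). *)
Local Open Scope ring_scope.
Definition rhs_coef (g m z p : nat) (n : nat) : rat :=
  (g%:R)^-1 * ( z%:R * (g%:R) ^+ n
              + (g%:R - m%:R) * ((p * z)%:R) ^+ n
              + (m%:R - z%:R) * (m%:R) ^+ n ).

From mathcomp Require Import all_boot all_order all_algebra all_fingroup all_solvable.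
Import GRing.Theory Num.Theory.

Set Implicit Arguments.
Unset Strict Implicit.
Unset Printing Implicit Defensive.

(* By the Cauchy-Frobenius (Burnside) lemma, alpha_{G,n} |G| is the sum
   over a in G of the number of n-tuples fixed by a, i.e. of |C_G(a)|^n.
   In a p-group the abelian maximal subgroup M is normal of index p, and
   centralisers take only three sizes: |G| on Z(G), |M| on M \ Z(G) (an
   element of M outside the centre is centralised exactly by M, by
   maximality), and p |Z(G)| outside M (there C_G(a) meets M in Z(G) and
   M C_G(a) = G). *)

Local Open Scope group_scope.

Section SimultaneousConjugation.

Variables (gT : finGroupType) (n : nat).

Definition sconj (x : {ffun 'I_n -> gT}) (g : gT) : {ffun 'I_n -> gT} :=
  [ffun i => x i ^ g].

Lemma sconj1 : sconj^~ 1 =1 id.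
Proof. by move=> x; apply/ffunP=> i; rewrite ffunE conjg1. Qed.

Lemma sconjM x : act_morph sconj x.
Proof. by move=> a b; apply/ffunP=> i; rewrite !ffunE conjgM. Qed.

Definition sconj_act := TotalAction sconj1 sconjM.

Lemma acts_tuples_in (G : {group gT}) :
  [acts G, on tuples_in G n | sconj_act].
Proof.
apply/actsP=> g Gg x; rewrite !inE.
by apply: eq_forallb => i; rewrite ffunE groupJr.
Qed.

Lemma card_sconj_fix (G : {group gT}) a : a \in G ->
  #|'Fix_(tuples_in G n | sconj_act)[a]| = (#|'C_G[a]| ^ n)%N.
Proof.
move=> Ga; rewrite -[in RHS](card_ord n) -card_ffun_on.
apply: eq_card => x; rewrite !inE sub1set inE.
apply/andP/ffun_onP => [[/forallP Gx /eqP/ffunP xa] i | Cx].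
  apply/subcent1P; split=> //; apply/commute_sym/commgP/conjg_fixP.
  by have := xa i; rewrite ffunE.
split; first by apply/forallP=> i; case/subcent1P: (Cx i).
apply/eqP/ffunP=> i; rewrite ffunE.
by case/subcent1P: (Cx i) => _ /commute_sym/commgP/conjg_fixP.
Qed.

Lemma alpha_mul_card (G : {group gT}) :
  (alpha G n * #|G| = \sum_(a in G) #|'C_G[a]| ^ n)%N.
Proof.
have -> : alpha G n = #|orbit sconj_act G @: tuples_in G n| by [].
rewrite -Frobenius_Cauchy; last exact: acts_tuples_in.
by apply: eq_bigr => a Ga; rewrite card_sconj_fix.
Qed.

End SimultaneousConjugation.

Section AbelianMaximalSubgroup.

Variables (gT : finGroupType) (G M : {group gT}).
Hypotheses (maxM : maximal M G) (abM : abelian M) (nabG : ~~ abelian G).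

Let sMG : M \subset G := proper_sub (maxgroupp maxM).

Lemma maximal_between (H : {group gT}) :
  M \subset H -> H \subset G -> H :=: M \/ H :=: G.
Proof.
move=> sMH; rewrite subEproper => /predU1P[-> | ltHG]; first by right.
by left; apply: (maxgroupP maxM).2.
Qed.

Lemma joing_maximal_outside (H : {group gT}) a :
  a \in H :\: M -> H \subset G -> M <*> H = G.
Proof.
case/setDP=> Ha aM sHG.
have sMHG : M <*> H \subset G by rewrite join_subG sMG.
have [MH_M | //] := maximal_between (joing_subl M H) sMHG.
by case/negP: aM; rewrite -MH_M (subsetP (joing_subr M H)).
Qed.

Lemma center_sub_abelian_maximal : 'Z(G) \subset M.
Proof.
have sMZG : M <*> 'Z(G) \subset G by rewrite join_subG sMG center_sub.
have [MZ_M | MZ_G] := maximal_between (joing_subl M 'Z(G)) sMZG.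
  by rewrite -MZ_M joing_subr.
case/negP: nabG; rewrite -MZ_G abelianY abM center_abelian.
exact: subset_trans (subsetIr G _) (centS sMG).
Qed.

Lemma cent1_center a : a \in 'Z(G) -> 'C_G[a] = G.
Proof.
by case/centerP=> _ cGa; apply/setIidPl; rewrite sub_cent1; apply/centP.
Qed.

Lemma cent1_abelian_maximal a : a \in M :\: 'Z(G) -> 'C_G[a] = M.
Proof.
case/setDP=> Ma aZ.
have sMCa : M \subset 'C_G[a] by rewrite subsetI sMG sub_cent1 (subsetP abM).
have [// | CaG] := maximal_between sMCa (subsetIl G _).
case/negP: aZ; rewrite inE (subsetP sMG) //= -sub_cent1 -CaG.
exact: subsetIr.
Qed.

Lemma abelian_maximal_meet_cent1 a :
  a \in G :\: M -> M :&: 'C_G[a] = 'Z(G).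
Proof.
move=> aGM; have /setDP[Ga aM] := aGM.
apply/eqP; rewrite eqEsubset subsetI center_sub_abelian_maximal.
rewrite subsetI center_sub sub_cent1 /=; apply/andP; split.
  have GMa : M <*> <[a]> = G.
    apply: (@joing_maximal_outside _ a); last by rewrite cycle_subG.
    by rewrite !inE aM cycle_id.
  apply/subsetP=> x /setIP[Mx /setIP[Gx Cax]].
  rewrite inE Gx /= -GMa centY inE cent_cycle Cax andbT.
  exact: (subsetP abM).
by apply/centP=> z /centerP[_ /(_ a Ga)].
Qed.

Hypothesis nsMG : M <| G.

Lemma card_cent1_outside a :
  a \in G :\: M -> #|'C_G[a]| = (#|G : M| * #|'Z(G)|)%N.
Proof.
move=> aGM; have /setDP[Ga aM] := aGM.
have MCa_G : M <*> 'C_G[a] = G.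
  apply: (@joing_maximal_outside _ a); last exact: subsetIl.
  by rewrite inE aM inE Ga cent1id.
have nMCa : 'C_G[a] \subset 'N(M).
  exact: subset_trans (subsetIl G _) (normal_norm nsMG).
have := mul_cardG M 'C_G[a].
rewrite -norm_joinEr // MCa_G abelian_maximal_meet_cent1 //.
rewrite -(Lagrange sMG) -mulnA.
by move/eqP; rewrite eqn_pmul2l // => /eqP.
Qed.

Lemma sum_card_cent1_expn n :
  (\sum_(a in G) #|'C_G[a]| ^ n = #|'Z(G)| * #|G| ^ n
     + (#|M| - #|'Z(G)|) * #|M| ^ n
     + (#|G| - #|M|) * (#|G : M| * #|'Z(G)|) ^ n)%N.
Proof.
have sZM := center_sub_abelian_maximal.
rewrite (big_setID M) (big_setID 'Z(G)) /= (setIidPr sMG) (setIidPr sZM).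
rewrite (eq_bigr (fun=> #|G| ^ n)%N) => [|a /cent1_center-> //].
rewrite [in X in (_ + X + _)%N](eq_bigr (fun=> #|M| ^ n)%N)
  => [|a /cent1_abelian_maximal-> //].
rewrite [in X in (_ + X)%N](eq_bigr (fun=> (#|G : M| * #|'Z(G)|) ^ n)%N)
  => [|a /card_cent1_outside-> //].
by rewrite !sum_nat_const !cardsD (setIidPr sZM) (setIidPr sMG).
Qed.

End AbelianMaximalSubgroup.

Local Close Scope group_scope.
Local Open Scope ring_scope.

Theorem theorem7p4 (gT : finGroupType) (G M : {group gT}) (p : nat) :
  prime p -> (p.-group G)%g -> ~~ abelian G ->
  maximal M G -> abelian M ->
  forall n : nat,
    (alpha G n)%:R = rhs_coef #|G| #|M| #|'Z(G)%g| p n :> rat.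
Proof.
move=> _ pG nabG maxM abM n.
have nsMG := p_maximal_normal pG maxM.
have sMG : M \subset G := proper_sub (maxgroupp maxM).
have sZM := center_sub_abelian_maximal maxM abM nabG.
have alphaG := alpha_mul_card n G.
rewrite (sum_card_cent1_expn maxM abM nabG nsMG) (p_maximal_index pG maxM)
  addnAC in alphaG.
have G_neq0 : #|G|%:R != 0 :> rat by rewrite pnatr_eq0 -lt0n cardG_gt0.
apply: (mulfI G_neq0); rewrite /rhs_coef mulrA mulfV // mul1r.
by rewrite -!natrB ?subset_leq_card // -!natrX -!natrM -!natrD mulnC alphaG.
Qed.
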